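(* Consider a dynamic finite set $S$ with a function $f:S\to\mathbb{Z}_{\ge0}$ that is modified only by the following restricted operations: insert a new element $x$ with $f(x)=0$; delete an element $x$ with $f(x)=0$; increment $f(x)$ by $1$ for some $x\in S$; decrement $f(x)$ by $1$ for some $x\in S$ with $f(x)\ge1$. If, over some contiguous sequence of such operations, the $h$-index of $S$ and $f$ changes from $h$ (before the sequence) to $h'>h$ (after the sequence), then the sequence contains at least $(h'-h)^2$ increment operations.
   Context: For a finite set $S$ and $f:S\to\mathbb{Z}_{\ge0}$, the $h$-index of $S$ and $f$ is the largest integer $h\ge 0$ such that there is a subset $H\subseteq S$ with $|H|=h$ and $f(x)\ge h$ for all $x\in H$. *)

From mathcomp Require Import all_boot.
Set Implicit Arguments. Unset Strict Implicit. Unset Printing Implicit Defensive.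

(* A state is a finite set S of elements of an eqType T, represented as a
   duplicate-free sequence, together with f : T -> nat (only its values on S
   matter). *)

Definition hindex_witness (T : eqType) (S : seq T) (f : T -> nat) (h : nat) : Prop :=
  exists H : seq T, [/\ uniq H, {subset H <= S}, size H = h & forall x, x \in H -> h <= f x].

Definition is_hindex (T : eqType) (S : seq T) (f : T -> nat) (h : nat) : Prop :=
  hindex_witness S f h /\ forall k, hindex_witness S f k -> k <= h.

Inductive opkind := OIns | ODel | OInc | ODec.

Definition is_inc (k : opkind) : bool := if k is OInc then true else false.

Inductive step (T : eqType) : seq T -> (T -> nat) -> opkind -> seq T -> (T -> nat) -> Prop :=
| step_ins S f f' x :
    x \notin S -> f' x = 0 -> (forall y, y \in S -> f' y = f y) ->
    step S f OIns (x :: S) f'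
| step_del S f f' x :
    x \in S -> f x = 0 -> (forall y, y \in rem x S -> f' y = f y) ->
    step S f ODel (rem x S) f'
| step_inc S f f' x :
    x \in S -> f' x = (f x).+1 -> (forall y, y \in S -> y != x -> f' y = f y) ->
    step S f OInc S f'
| step_dec S f f' x :
    x \in S -> 1 <= f x -> f' x = (f x).-1 -> (forall y, y \in S -> y != x -> f' y = f y) ->
    step S f ODec S f'.

Inductive run (T : eqType) : seq T -> (T -> nat) -> seq opkind -> seq T -> (T -> nat) -> Prop :=
| run_nil S f : run S f [::] S f
| run_cons S f k S' f' ops S'' f'' :
    step S f k S' f' -> run S' f' ops S'' f'' -> run S f (k :: ops) S'' f''.

From mathcomp Require Import all_boot.

Set Implicit Arguments. Unset Strict Implicit.

(* Read f as a function on all of T that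
   vanishes outside S.  A single operation raises this function by at most one,
   at a single point, and only if it is an increment; hence for any fixed
   duplicate-free sequence X the potential  sum_{x in X} f(x)  grows by at most
   the number of increments over a run.
   Now let H be a witness for the final h-index h' and let X be the elements
   of H whose initial value is at most h.  The other elements of H had initial
   value > h, so there are at most h of them (else the initial h-index would
   exceed h); thus |X| >= h' - h.  Over the run the potential of X climbs from
   at most |X| h to at least |X| h', so the run contains at least
   |X| (h' - h) >= (h' - h)^2 increments. *)

Definition val_on (T : eqType) (S : seq T) (f : T -> nat) (x : T) : nat :=
  if x \in S then f x else 0.

Lemma step_val_on (T : eqType) (S : seq T) f k S' f' :
  step S f k S' f' ->
  exists y : T, forall x : T, val_on S' f' x <= val_on S f x + (is_inc k && (x == y)).
Proof.
case=> {}S {}f {}f' y yS.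
- move=> f'y f'S; exists y => x; rewrite /val_on in_cons.
  have [->|nxy] /= := eqVneq x y; first by rewrite f'y.
  by case: ifP => // xS; rewrite f'S // addn0.
- move=> _ f'S; exists y => x; rewrite /val_on /= addn0.
  case: ifP => // xS; rewrite f'S // (mem_rem xS); exact: leqnn.
- move=> f'y f'S; exists y => x; rewrite /val_on /=.
  have [->|nxy] := eqVneq x y; first by rewrite yS f'y addn1.
  by case: ifP => // xS; rewrite f'S // addn0.
- move=> _ f'y f'S; exists y => x; rewrite /val_on /= addn0.
  have [->|nxy] := eqVneq x y; first by rewrite yS f'y leq_pred.
  by case: ifP => // xS; rewrite f'S.
Qed.

Definition potential (T : eqType) (X : seq T) (S : seq T) (f : T -> nat) : nat :=
  \sum_(x <- X) val_on S f x.

Lemma sum_indicator_uniq (T : eqType) (X : seq T) (y : T) :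
  uniq X -> \sum_(x <- X) (x == y) <= 1.
Proof.
move=> uX; apply: leq_trans (leq_b1 (y \in X)).
rewrite -(count_uniq_mem y uX) -sum1_count [leqRHS]big_mkcond /=.
by apply: leq_sum => x _; case: (x == y).
Qed.

Lemma run_potential (T : eqType) (X : seq T) S f ops S' f' :
  uniq X -> run S f ops S' f' ->
  potential X S' f' <= potential X S f + count is_inc ops.
Proof.
move=> uX; elim=> {S f ops S' f'} [S f|S f k S' f' ops S'' f'' st _ IH] /=.
  by rewrite addn0.
apply: (leq_trans IH); rewrite addnA leq_add2r.
have [y Hy] := step_val_on st.
apply: (leq_trans (@leq_sum _ X xpredT _ _ (fun x _ => Hy x))).
rewrite big_split /= leq_add2l.
case: (is_inc k) => /=; last by rewrite big1.
exact: sum_indicator_uniq.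
Qed.

(* If h is the h-index of S and f, then at most h distinct points have a
   value exceeding h: h + 1 of them would witness an h-index of h + 1. *)
Lemma hindex_few_large (T : eqType) (S : seq T) f h (Y : seq T) :
  is_hindex S f h -> uniq Y -> (forall x, x \in Y -> h < val_on S f x) ->
  size Y <= h.
Proof.
move=> [_ hmax] uY Ylarge; rewrite leqNgt; apply/negP => bigY.
have : h.+1 <= h; last by rewrite ltnn.
apply: hmax; exists (take h.+1 Y); split.
- exact: take_uniq.
- by move=> x /mem_take /Ylarge; rewrite /val_on; case: ifP.
- exact: size_takel.
- by move=> x /mem_take /Ylarge; rewrite /val_on; case: ifP.
Qed.

Theorem lemma1 (T : eqType) (S0 : seq T) (f0 : T -> nat) (ops : seq opkind)
  (S1 : seq T) (f1 : T -> nat) (h h' : nat) :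
  uniq S0 ->
  run S0 f0 ops S1 f1 ->
  is_hindex S0 f0 h -> is_hindex S1 f1 h' -> h < h' ->
  (h' - h) ^ 2 <= count is_inc ops.
Proof.
move=> _ R hS0 [[H [uH sH szH fH]] _] _.
pose small x := val_on S0 f0 x <= h.
pose X := [seq x <- H | small x].
have uX : uniq X by exact: filter_uniq.
have few_large : count (predC small) H <= h.
  rewrite -size_filter; apply: hindex_few_large hS0 (filter_uniq _ uH) _.
  by move=> x; rewrite mem_filter /= -ltnNge => /andP[].
have szX : h' - h <= size X.
  by rewrite /X size_filter leq_subLR -szH -(count_predC small) addnC leq_add2r.
have start : potential X S0 f0 <= size X * h.
  rewrite /potential /X big_filter size_filter -sum1_count big_distrl /=.
  by apply: leq_sum => x; rewrite mul1n.
have final : size X * h' <= potential X S1 f1.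
  rewrite /potential /X big_filter size_filter -sum1_count big_distrl /=.
  rewrite big_seq_cond [leqRHS]big_seq_cond; apply: leq_sum => x /andP[xH _].
  by rewrite mul1n /val_on sH // fH.
have incs : size X * (h' - h) <= count is_inc ops.
  rewrite mulnBr leq_subLR (leq_trans final) // addnC.
  by rewrite (leq_trans (run_potential uX R)) // addnC leq_add2l.
by apply: leq_trans incs; rewrite expnS expn1 leq_mul2r szX orbT.
Qed.
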